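(* Under the hypotheses and notation of the context, for every $\epsilon>0$ there exists $\mu_\epsilon>1$ such that for all $1\le\mu\le\mu_\epsilon$ and all $(x,t)\in\mathbb T^N\times[0,\infty)$, $$P_{\eta\mu}[u](x,t)\ge P_{\eta1}[u](x,t)-\epsilon.$$ Consequently, if $m_{\eta1}:=\lim_{t\to\infty}\max\{0,\sup_xP_{\eta1}[u](x,t)\}>0$, then there is $\mu_\eta>1$ such that $\sup_{x}P_{\eta\mu}[u](x,t)\ge m_{\eta1}/2$ for all $t\ge0$ and $1<\mu<\mu_\eta$.
   Context: $\mathbb T^N=\mathbb R^N/\mathbb Z^N$. $u\in C(\mathbb T^N\times[0,\infty))$ is a bounded function (the bounded viscosity solution of the equation $u_t+\sup_\theta\{-\mathrm{tr}(A_\theta D^2u)+H_\theta(x,Du)\}=0$ with ergodic constant normalized to $0$, under the standing assumptions of bounded Lipschitz diffusions, locally Lipschitz Hamiltonians, convexity in $p$, and uniform Lipschitz bounds in $x$), and $v$ is a bounded continuous function on $\mathbb T^N$. For $\eta>0$, $\mu\ge1$: $P_{\eta\mu}[u](x,t)=\sup_{s\ge t}\{u(x,t)-v(x)-\mu(u(x,s)-v(x))-\mu\eta(s-t)\}$. It is known (Lemma 4.2) that $t\mapsto\max\{0,\sup_xP_{\eta1}[u](x,t)\}$ is nonincreasing, so $m_{\eta1}$ is well defined. *)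

From Stdlib Require Import Reals Lra ClassicalEpsilon.
From Stdlib Require Fin.
Open Scope R_scope.

(* Points of R^N; the torus T^N = R^N/Z^N is modelled by Z^N-periodic functions. *)
Definition Vec (N : nat) := Fin.t N -> R.

(* Supremum of a set of reals (well defined whenever the set is nonempty and
   bounded above, which is the case for all sets used below). *)
Definition Rsup (E : R -> Prop) : R :=
  epsilon (inhabits 0) (fun l => is_lub E l).

Definition Pemu {N : nat} (eta mu : R) (u : Vec N -> R -> R) (v : Vec N -> R)
  (x : Vec N) (t : R) : R :=
  Rsup (fun r => exists s, t <= s /\
          r = u x t - v x - mu * (u x s - v x) - mu * eta * (s - t)).

Definition supP {N : nat} (eta mu : R) (u : Vec N -> R -> R) (v : Vec N -> R)
  (t : R) : R :=
  Rsup (fun r => exists x : Vec N, r = Pemu eta mu u v x t).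

Definition lim_at_infty (f : R -> R) (l : R) : Prop :=
  forall eps, eps > 0 -> exists T, forall t, t >= T -> Rabs (f t - l) < eps.

Definition periodic_x {N : nat} (u : Vec N -> R -> R) : Prop :=
  forall (x : Vec N) (k : Fin.t N -> Z) (t : R),
    u (fun j => x j + IZR (k j)) t = u x t.

Definition periodic {N : nat} (v : Vec N -> R) : Prop :=
  forall (x : Vec N) (k : Fin.t N -> Z), v (fun j => x j + IZR (k j)) = v x.

Definition cont_xt {N : nat} (u : Vec N -> R -> R) : Prop :=
  forall (x : Vec N) t, 0 <= t -> forall eps, eps > 0 -> exists delta, delta > 0 /\
    forall (y : Vec N) s, 0 <= s -> (forall j, Rabs (y j - x j) < delta) ->
      Rabs (s - t) < delta -> Rabs (u y s - u x t) < eps.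

Definition cont_x {N : nat} (v : Vec N -> R) : Prop :=
  forall (x : Vec N) eps, eps > 0 -> exists delta, delta > 0 /\
    forall (y : Vec N), (forall j, Rabs (y j - x j) < delta) ->
      Rabs (v y - v x) < eps.

From Stdlib Require Import Reals Lra ClassicalEpsilon Classical.
Open Scope R_scope.

(* Write w(x,s) = u(x,s) - v(x), bounded by K, and let
     pen_mu(s) = w(x,t) - mu w(x,s) - mu eta (s-t),  so P_{eta mu} = sup_{s>=t} pen_mu(s).
   Since pen_1(t) = 0 we have P_{eta 1} >= 0, hence any s whose value pen_1(s)
   is within delta of P_{eta 1} satisfies eta (s-t) <= 2K + delta: near-maximizers
   live in a bounded window.  On that window
     pen_mu(s) = pen_1(s) - (mu-1) (w(x,s) + eta (s-t))
   differs from pen_1(s) by at most (mu-1)(3K + delta), which gives the first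
   claim with an explicit mu_eps.  Taking the supremum in x transfers the
   pointwise estimate to sup_x P.  For the second claim, a nonincreasing function
   lies above its limit, so sup_x P_{eta 1}[u](.,t) >= m_{eta 1} for every t, and
   the first claim with eps = m_{eta 1}/2 concludes. *)

Definition bounded_above (E : R -> Prop) : Prop := exists M, forall r, E r -> r <= M.

Lemma Rsup_lub (E : R -> Prop) :
  (exists r, E r) -> bounded_above E -> is_lub E (Rsup E).
Proof.
  intros [r Hr] [M HM]. unfold Rsup.
  apply epsilon_spec.
  destruct (completeness E) as [l Hl].
  - exists M. intros y Hy. now apply HM.
  - now exists r.
  - now exists l.
Qed.

Lemma Rsup_ge (E : R -> Prop) (r : R) : E r -> bounded_above E -> r <= Rsup E.
Proof. intros Hr HM. apply (Rsup_lub E (ex_intro _ r Hr) HM); assumption. Qed.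

Lemma Rsup_le (E : R -> Prop) (M : R) :
  (exists r, E r) -> (forall r, E r -> r <= M) -> Rsup E <= M.
Proof.
  intros Hne HM. apply (Rsup_lub E Hne (ex_intro _ M HM)). exact HM.
Qed.

Lemma Rsup_approx (E : R -> Prop) (eps : R) :
  (exists r, E r) -> bounded_above E -> eps > 0 -> exists r, E r /\ r > Rsup E - eps.
Proof.
  intros Hne Hbd Heps. apply NNPP. intros Hnone.
  assert (Rsup E <= Rsup E - eps); [|lra].
  apply Rsup_le; [exact Hne|]. intros r Hr.
  apply Rnot_lt_le. intros Hlt. apply Hnone. exists r. split; [exact Hr | lra].
Qed.

Lemma nonincreasing_ge_limit (f : R -> R) (m : R) :
  (forall t1 t2, 0 <= t1 -> t1 <= t2 -> f t2 <= f t1) ->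
  lim_at_infty f m -> forall t, 0 <= t -> m <= f t.
Proof.
  intros Hmono Hlim t Ht. apply Rnot_lt_le. intros Hlt.
  destruct (Hlim (m - f t) ltac:(lra)) as [T HT].
  pose proof (HT (Rmax T t) (Rle_ge _ _ (Rmax_l T t))) as Hclose.
  pose proof (Hmono t (Rmax T t) Ht (Rmax_r T t)).
  apply Rabs_def2 in Hclose. lra.
Qed.

Section Penalization.

Variables (N : nat) (u : Vec N -> R -> R) (v : Vec N -> R) (eta K : R).
Hypothesis eta_nonneg : 0 <= eta.
Hypothesis w_bounded : forall x t, 0 <= t -> Rabs (u x t - v x) <= K.

Lemma w_bounds (x : Vec N) (t : R) : 0 <= t -> - K <= u x t - v x <= K.
Proof.
  intros Ht. pose proof (w_bounded x t Ht) as H.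
  unfold Rabs in H. destruct (Rcase_abs (u x t - v x)); lra.
Qed.

Lemma K_nonneg : 0 <= K.
Proof. pose proof (w_bounds (fun _ => 0) 0 (Rle_refl 0)). lra. Qed.

Definition penalty (mu : R) (x : Vec N) (t s : R) : R :=
  u x t - v x - mu * (u x s - v x) - mu * eta * (s - t).

Definition penalty_values (mu : R) (x : Vec N) (t : R) : R -> Prop :=
  fun r => exists s, t <= s /\ r = penalty mu x t s.

Lemma Pemu_as_sup (mu : R) (x : Vec N) (t : R) :
  Pemu eta mu u v x t = Rsup (penalty_values mu x t).
Proof. reflexivity. Qed.

Lemma penalty_values_nonempty (mu : R) (x : Vec N) (t : R) :
  exists r, penalty_values mu x t r.
Proof. exists (penalty mu x t t). exists t. split; [lra | reflexivity]. Qed.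

Lemma penalty_le (mu : R) (x : Vec N) (t s : R) :
  0 <= mu -> 0 <= t -> t <= s -> penalty mu x t s <= K + mu * K.
Proof.
  intros Hmu Ht Hs. unfold penalty.
  pose proof (w_bounds x t Ht). pose proof (w_bounds x s ltac:(lra)).
  assert (0 <= mu * eta * (s - t)) by (apply Rmult_le_pos; [apply Rmult_le_pos|]; lra).
  assert (- (mu * (u x s - v x)) <= mu * K) by nra.
  lra.
Qed.

Lemma penalty_values_bounded (mu : R) (x : Vec N) (t : R) :
  0 <= mu -> 0 <= t -> bounded_above (penalty_values mu x t).
Proof.
  intros Hmu Ht. exists (K + mu * K). intros r [s [Hs ->]]. now apply penalty_le.
Qed.

Lemma penalty_le_Pemu (mu : R) (x : Vec N) (t s : R) :
  0 <= mu -> 0 <= t -> t <= s -> penalty mu x t s <= Pemu eta mu u v x t.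
Proof.
  intros Hmu Ht Hs. rewrite Pemu_as_sup. apply Rsup_ge.
  - exists s. split; [exact Hs | reflexivity].
  - now apply penalty_values_bounded.
Qed.

Lemma Pemu_le_bound (mu : R) (x : Vec N) (t : R) :
  0 <= mu -> 0 <= t -> Pemu eta mu u v x t <= K + mu * K.
Proof.
  intros Hmu Ht. rewrite Pemu_as_sup. apply Rsup_le.
  - apply penalty_values_nonempty.
  - intros r [s [Hs ->]]. now apply penalty_le.
Qed.

(* P_{eta 1} >= 0, witnessed by s = t. *)
Lemma Pemu1_nonneg (x : Vec N) (t : R) : 0 <= t -> 0 <= Pemu eta 1 u v x t.
Proof.
  intros Ht. replace 0 with (penalty 1 x t t) by (unfold penalty; ring).
  apply penalty_le_Pemu; lra.
Qed.

Lemma near_maximizer (x : Vec N) (t delta : R) : 0 <= t -> delta > 0 ->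
  exists s, t <= s /\ penalty 1 x t s > Pemu eta 1 u v x t - delta /\
            eta * (s - t) <= 2 * K + delta.
Proof.
  intros Ht Hdelta.
  destruct (Rsup_approx _ delta (penalty_values_nonempty 1 x t)
              (penalty_values_bounded 1 x t ltac:(lra) Ht) Hdelta)
    as [r [[s [Hs ->]] Hr]].
  rewrite <- Pemu_as_sup in Hr.
  exists s. split; [exact Hs | split; [exact Hr |]].
  pose proof (Pemu1_nonneg x t Ht).
  pose proof (w_bounds x t Ht). pose proof (w_bounds x s ltac:(lra)).
  unfold penalty in Hr. lra.
Qed.

Lemma penalty_shift (mu : R) (x : Vec N) (t s : R) :
  penalty mu x t s = penalty 1 x t s - (mu - 1) * ((u x s - v x) + eta * (s - t)).
Proof. unfold penalty. ring. Qed.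

Lemma Pemu_continuity_at_1 (eps : R) : eps > 0 ->
  forall mu, 1 <= mu <= 1 + eps / (2 * (3 * K + eps + 1)) ->
  forall x t, 0 <= t -> Pemu eta mu u v x t >= Pemu eta 1 u v x t - eps.
Proof.
  intros Heps mu Hmu x t Ht.
  set (D := 3 * K + eps + 1).
  assert (HD : D > 0) by (pose proof K_nonneg; unfold D; lra).
  destruct (near_maximizer x t (eps / 2) Ht ltac:(lra)) as [s [Hs [Hnear Hwindow]]].
  assert (Hgap : (mu - 1) * D <= eps / 2).
  { replace (eps / 2) with (eps / (2 * D) * D) by (field; lra).
    apply Rmult_le_compat_r; fold D in Hmu; lra. }
  assert (Hshift : (mu - 1) * ((u x s - v x) + eta * (s - t)) <= (mu - 1) * D).
  { pose proof (w_bounds x s ltac:(lra)).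
    apply Rmult_le_compat_l; unfold D; lra. }
  pose proof (penalty_le_Pemu mu x t s ltac:(lra) Ht Hs).
  rewrite penalty_shift in *. lra.
Qed.

Definition Pemu_values (mu t : R) : R -> Prop :=
  fun r => exists x : Vec N, r = Pemu eta mu u v x t.

Lemma supP_as_sup (mu t : R) : supP eta mu u v t = Rsup (Pemu_values mu t).
Proof. reflexivity. Qed.

Lemma Pemu_le_supP (mu : R) (x : Vec N) (t : R) :
  0 <= mu -> 0 <= t -> Pemu eta mu u v x t <= supP eta mu u v t.
Proof.
  intros Hmu Ht. rewrite supP_as_sup. apply Rsup_ge.
  - now exists x.
  - exists (K + mu * K). intros r [y ->]. now apply Pemu_le_bound.
Qed.

Lemma supP_compare (mu t eps : R) : 0 <= mu -> 0 <= t ->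
  (forall x, Pemu eta mu u v x t >= Pemu eta 1 u v x t - eps) ->
  supP eta mu u v t >= supP eta 1 u v t - eps.
Proof.
  intros Hmu Ht Hcmp. apply Rle_ge.
  assert (supP eta 1 u v t <= supP eta mu u v t + eps); [|lra].
  rewrite (supP_as_sup 1). apply Rsup_le.
  - now exists (Pemu eta 1 u v (fun _ => 0) t), (fun _ => 0).
  - intros r [x ->]. pose proof (Hcmp x). pose proof (Pemu_le_supP mu x t Hmu Ht). lra.
Qed.

End Penalization.

Lemma difference_bounded {N : nat} (u : Vec N -> R -> R) (v : Vec N -> R) :
  (exists C, forall x t, 0 <= t -> Rabs (u x t) <= C) ->
  (exists C, forall x, Rabs (v x) <= C) ->
  exists K, forall x t, 0 <= t -> Rabs (u x t - v x) <= K.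
Proof.
  intros [Cu HCu] [Cv HCv]. exists (Cu + Cv). intros x t Ht.
  pose proof (Rabs_triang (u x t) (- v x)). rewrite Rabs_Ropp in *.
  pose proof (HCu x t Ht). pose proof (HCv x). unfold Rminus. lra.
Qed.

Theorem lemma4p3 (N : nat) (u : Vec N -> R -> R) (v : Vec N -> R) (eta : R)
  (Hu_per : periodic_x u) (Hu_cont : cont_xt u)
  (Hu_bd : exists C, forall x t, 0 <= t -> Rabs (u x t) <= C)
  (Hv_per : periodic v) (Hv_cont : cont_x v)
  (Hv_bd : exists C, forall x, Rabs (v x) <= C)
  (Heta : eta > 0)
  (* Lemma 4.2: t |-> max{0, sup_x P_{eta 1}[u](x,t)} is nonincreasing *)
  (Hmono : forall t1 t2, 0 <= t1 -> t1 <= t2 ->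
     Rmax 0 (supP eta 1 u v t2) <= Rmax 0 (supP eta 1 u v t1)) :
  (forall eps, eps > 0 -> exists mu_eps, mu_eps > 1 /\
     forall mu, 1 <= mu <= mu_eps -> forall (x : Vec N) t, 0 <= t ->
       Pemu eta mu u v x t >= Pemu eta 1 u v x t - eps)
  /\
  (forall m, lim_at_infty (fun t => Rmax 0 (supP eta 1 u v t)) m -> m > 0 ->
     exists mu_eta, mu_eta > 1 /\
       forall t mu, 0 <= t -> 1 < mu < mu_eta -> supP eta mu u v t >= m / 2).
Proof.
  destruct (difference_bounded u v Hu_bd Hv_bd) as [K HK].
  assert (Heta0 : 0 <= eta) by lra.
  assert (Hcont : forall eps, eps > 0 -> exists mu_eps, mu_eps > 1 /\
            forall mu, 1 <= mu <= mu_eps -> forall (x : Vec N) t, 0 <= t ->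
              Pemu eta mu u v x t >= Pemu eta 1 u v x t - eps).
  { intros eps Heps. exists (1 + eps / (2 * (3 * K + eps + 1))). split.
    - pose proof (K_nonneg N u v K HK).
      assert (eps / (2 * (3 * K + eps + 1)) > 0) by (apply Rdiv_lt_0_compat; lra). lra.
    - exact (Pemu_continuity_at_1 N u v eta K Heta0 HK eps Heps). }
  split; [exact Hcont |].
  intros m Hlim Hm.
  destruct (Hcont (m / 2) ltac:(lra)) as [mu_eta [Hmu_eta Hclose]].
  exists mu_eta. split; [exact Hmu_eta |]. intros t mu Ht Hmu.
  assert (Habove : m <= supP eta 1 u v t).
  { pose proof (nonincreasing_ge_limit _ m Hmono Hlim t Ht) as H.
    unfold Rmax in H. destruct (Rle_dec 0 (supP eta 1 u v t)); lra. }
  pose proof (supP_compare N u v eta K Heta0 HK mu t (m / 2) ltac:(lra) Ht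
                (fun x => Hclose mu ltac:(lra) x t Ht)).
  lra.
Qed.
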